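(* For $q>-1$ and $x,y>0$ let $H(q,x,y)=\frac{1}{1+q}\int_{-1}^q\frac{(1+s)^2}{s^2}(1-e^{-sx})(1-e^{-sy})\,ds$, and for $X,Y>0$ let $$\tilde H(q,X,Y)=\frac{e^{-(X+Y)/(1+q)}}{(1+q)^2}\,H\Big(q,\frac{X}{1+q},\frac{Y}{1+q}\Big).$$ Then, for every sequence $q_n\to-1$ (with $q_n>-1$), $$\tilde H(q_n,X,Y)\to\frac{1}{(X+Y)^3}\int_0^{X+Y}\xi^2e^{-\xi}\,d\xi$$ locally uniformly in $(X,Y)\in(0,\infty)^2$. *)

From Stdlib Require Import Reals.
From Coquelicot Require Import Coquelicot.
Open Scope R_scope.

(* Integrand of H; at s = 0 the formula is 0/0 (removable singularity);
   the value at a single point does not affect the Riemann integral. *)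
Definition H_integrand (x y s : R) : R :=
  (1 + s) ^ 2 / s ^ 2 * (1 - exp (- (s * x))) * (1 - exp (- (s * y))).

Definition H (q x y : R) : R :=
  / (1 + q) * RInt (H_integrand x y) (-1) q.

Definition Htilde (q X Y : R) : R :=
  exp (- ((X + Y) / (1 + q))) / (1 + q) ^ 2 * H q (X / (1 + q)) (Y / (1 + q)).

Definition Hlim (X Y : R) : R :=
  / (X + Y) ^ 3 * RInt (fun xi => xi ^ 2 * exp (- xi)) 0 (X + Y).

From Stdlib Require Import Reals Lra ssreflect.
From Coquelicot Require Import Coquelicot.
Open Scope R_scope.

(* Write e = 1 + q.  The substitution s = e t - 1 in H and xi = (X + Y) t in
   the limit turns both quantities into integrals over [0, 1]; the factor
   exp(-(X+Y)/e) is absorbed so that the rescaled integrand of Htilde is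
   t^2 / (1 - e t)^2 (exp(-tX) - exp(-X/e)) (exp(-tY) - exp(-Y/e)).
   Against t^2 exp(-t(X+Y)) it differs by O(e) from the prefactor and by at
   most exp(-X/e) + exp(-Y/e) <= 2e/a from the shifts, uniformly for
   X, Y >= a. *)

Lemma ex_RInt_derivable (f : R -> R) (a b : R) :
  (forall x, Rmin a b <= x <= Rmax a b -> ex_derive f x) -> ex_RInt f a b.
Proof.
  move=> df; apply: (ex_RInt_continuous (V := R_CompleteNormedModule)) => x Hx.
  exact: (ex_derive_continuous (K := R_AbsRing) (V := R_NormedModule) _ _ (df x Hx)).
Qed.

Definition Hlim_integrand (X Y t : R) : R := t ^ 2 * exp (- (t * (X + Y))).

Definition Htilde_integrand (e X Y t : R) : R :=
  t ^ 2 / (1 - e * t) ^ 2 * (exp (- (t * X)) - exp (- (X / e)))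
    * (exp (- (t * Y)) - exp (- (Y / e))).

Lemma ex_RInt_Hlim_integrand (X Y : R) : ex_RInt (Hlim_integrand X Y) 0 1.
Proof. apply: ex_RInt_derivable => x _; rewrite /Hlim_integrand; auto_derive; done. Qed.

Lemma ex_RInt_Htilde_integrand (e X Y : R) :
  0 < e < 1 -> ex_RInt (Htilde_integrand e X Y) 0 1.
Proof.
  move=> He; apply: ex_RInt_derivable => x.
  rewrite Rmin_left ?Rmax_right; try lra; move=> Hx.
  have Hw : 0 < 1 - e * x by nra.
  rewrite /Htilde_integrand; auto_derive; repeat split; auto; nra.
Qed.

Lemma Hlim_rescale (X Y : R) :
  0 < X + Y -> Hlim X Y = RInt (Hlim_integrand X Y) 0 1.
Proof.
  move=> HS; rewrite /Hlim; set S := X + Y in HS *.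
  set F := fun xi => xi ^ 2 * exp (- xi).
  have HF : ex_RInt F (S * 0 + 0) (S * 1 + 0).
    by apply: ex_RInt_derivable => x _; rewrite /F; auto_derive.
  have := RInt_comp_lin F S 0 0 1 HF.
  rewrite Rmult_0_r Rmult_1_r !Rplus_0_r => <-.
  rewrite (RInt_ext _ (fun t => scal (S ^ 3) (Hlim_integrand X Y t))).
  - rewrite (RInt_scal (V := R_CompleteNormedModule)); last exact: ex_RInt_Hlim_integrand.
    rewrite /scal /= /mult /=; field; lra.
  - move=> t _; rewrite /scal /= /mult /= /F /Hlim_integrand -/S.
    rewrite Rplus_0_r (Rmult_comm S t); ring.
Qed.

Lemma H_integrand_rescale (e X Y t : R) :
  0 < e -> e * t < 1 ->
  exp (- ((X + Y) / e)) / e ^ 2 * / e * (e * H_integrand (X / e) (Y / e) (e * t + -1))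
  = Htilde_integrand e X Y t.
Proof.
  move=> He Ht.
  have shift Z : exp (- ((e * t + -1) * (Z / e))) = exp (Z / e) * exp (- (t * Z)).
    by rewrite -exp_plus; f_equal; field; lra.
  have split_sum : exp (- ((X + Y) / e)) = / exp (X / e) * / exp (Y / e).
    by rewrite -!exp_Ropp -exp_plus; f_equal; field; lra.
  have := exp_pos (X / e); have := exp_pos (Y / e).
  rewrite /H_integrand /Htilde_integrand !shift split_sum.
  rewrite [exp (- (X / e))]exp_Ropp [exp (- (Y / e))]exp_Ropp => PY PX.
  field; repeat split; lra.
Qed.

Lemma Htilde_rescale (q X Y : R) :
  0 < 1 + q < 1 -> Htilde q X Y = RInt (Htilde_integrand (1 + q) X Y) 0 1.
Proof.
  move=> He; set e := 1 + q in He *.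
  set F := H_integrand (X / e) (Y / e).
  have HF : ex_RInt F (e * 0 + -1) (e * 1 + -1).
    apply: ex_RInt_derivable => x.
    rewrite Rmin_left ?Rmax_right; try lra; move=> Hx.
    have Hx0 : x < 0 by lra.
    rewrite /F /H_integrand; auto_derive; repeat split; auto; nra.
  have := RInt_comp_lin F e (-1) 0 1 HF.
  rewrite Rmult_0_r Rplus_0_l Rmult_1_r (_ : e + -1 = q); last by rewrite /e; ring.
  rewrite /Htilde /H -/e -/F => <-.
  rewrite -Rmult_assoc.
  apply: eq_trans (eq_sym (RInt_scal (V := R_CompleteNormedModule) _ 0 1 _ _)) _;
    first exact: (ex_RInt_comp_lin (V := R_CompleteNormedModule)).
  apply: RInt_ext => t; rewrite Rmin_left ?Rmax_right; try lra; move=> Ht.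
  rewrite /scal /= /mult /= /F H_integrand_rescale //; nra.
Qed.

Lemma exp_neg_le_1 (z : R) : 0 <= z -> exp (- z) <= 1.
Proof.
  move=> Hz; rewrite exp_Ropp -Rinv_1.
  have ? := exp_ineq1_le z; apply: Rinv_le_contravar; lra.
Qed.

Lemma exp_neg_div_le (e a X : R) : 0 < e -> 0 < a <= X -> exp (- (X / e)) <= e / a.
Proof.
  move=> He Ha; rewrite exp_Ropp.
  have Hx : a / e <= X / e by apply: Rmult_le_compat_r; [apply/Rlt_le/Rinv_0_lt_compat|]; lra.
  have Ha' : 0 < a / e by apply: Rdiv_lt_0_compat; lra.
  have := exp_ineq1_le (X / e).
  rewrite (_ : e / a = / (a / e)); last by field; lra.
  move=> ?; apply: Rinv_le_contravar; lra.
Qed.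

Lemma inv_sqr_1_sub_bound (u : R) :
  0 <= u <= 1/2 -> 0 <= / (1 - u) ^ 2 - 1 <= 8 * u.
Proof.
  move=> Hu; set c := / (1 - u) ^ 2.
  have Hc : c * (1 - u) ^ 2 = 1 by rewrite /c; field; lra.
  have Hc4 : c <= 4.
    rewrite /c (_ : 4 = / ((1/2) ^ 2)); last by field.
    apply: Rinv_le_contravar; nra.
  have Hc0 : 0 < c by rewrite /c; apply/Rinv_0_lt_compat; nra.
  have -> : c - 1 = c * (u * (2 - u)) by nra.
  split; nra.
Qed.

Lemma shifted_product_bound (u v al be : R) :
  0 <= u <= 1 -> 0 <= v <= 1 -> 0 <= al <= 1 -> 0 <= be <= 1 ->
  Rabs ((u - al) * (v - be)) <= 1 /\ Rabs ((u - al) * (v - be) - u * v) <= al + be.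
Proof.
  move=> Hu Hv Hal Hbe; split; last by apply: Rabs_le; split; nra.
  rewrite Rabs_mult -(Rmult_1_l 1).
  apply: Rmult_le_compat; try apply: Rabs_pos; apply: Rabs_le; lra.
Qed.

Lemma Htilde_integrand_near (e a X Y t : R) :
  0 < e <= 1/2 -> 0 < a -> a <= X -> a <= Y -> 0 <= t <= 1 ->
  Rabs (Htilde_integrand e X Y t - Hlim_integrand X Y t) <= (8 + 2 / a) * e.
Proof.
  move=> He Ha HX HY Ht.
  set u := exp (- (t * X)); set v := exp (- (t * Y)).
  set al := exp (- (X / e)); set be := exp (- (Y / e)).
  set c := / (1 - e * t) ^ 2; set P := (u - al) * (v - be).
  have Hu : 0 < u <= 1 by split; [exact: exp_pos | apply: exp_neg_le_1; nra].
  have Hv : 0 < v <= 1 by split; [exact: exp_pos | apply: exp_neg_le_1; nra].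
  have Hal : 0 < al <= e / a by split; [exact: exp_pos | apply: exp_neg_div_le; lra].
  have Hbe : 0 < be <= e / a by split; [exact: exp_pos | apply: exp_neg_div_le; lra].
  have Hal1 : al <= 1 by apply: exp_neg_le_1; apply/Rlt_le/Rdiv_lt_0_compat; lra.
  have Hbe1 : be <= 1 by apply: exp_neg_le_1; apply/Rlt_le/Rdiv_lt_0_compat; lra.
  have Hc : 0 <= c - 1 <= 8 * e.
    have := inv_sqr_1_sub_bound (e * t); rewrite -/c; nra.
  have [HP HPuv] : Rabs P <= 1 /\ Rabs (P - u * v) <= al + be.
    by apply: shifted_product_bound; lra.
  have Hexp : exp (- (t * (X + Y))) = u * v by rewrite -exp_plus; f_equal; ring.
  rewrite /Htilde_integrand /Hlim_integrand Hexp -/u -/v -/al -/be.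
  rewrite (_ : _ - _ = t ^ 2 * ((c - 1) * P + (P - u * v)));
    last by rewrite /c /P; field; nra.
  rewrite Rabs_mult Rabs_right; last by nra.
  have Hsum : Rabs ((c - 1) * P + (P - u * v)) <= (8 + 2 / a) * e.
    apply: Rle_trans (Rabs_triang _ _) _.
    rewrite Rabs_mult (Rabs_right (c - 1)); last by lra.
    rewrite (_ : (8 + 2 / a) * e = 8 * e + 2 * (e / a)); last by field; lra.
    nra.
  have Ht2 : t ^ 2 <= 1 by nra.
  have := Rabs_pos ((c - 1) * P + (P - u * v)); nra.
Qed.

Lemma Htilde_near_Hlim (q a X Y : R) :
  0 < 1 + q <= 1/2 -> 0 < a -> a <= X -> a <= Y ->
  Rabs (Htilde q X Y - Hlim X Y) <= (8 + 2 / a) * (1 + q).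
Proof.
  move=> Hq Ha HX HY.
  rewrite Htilde_rescale ?Hlim_rescale; try lra.
  have Hg : ex_RInt (Htilde_integrand (1 + q) X Y) 0 1.
    by apply: ex_RInt_Htilde_integrand; lra.
  have Hf := ex_RInt_Hlim_integrand X Y.
  have -> : RInt (Htilde_integrand (1 + q) X Y) 0 1 - RInt (Hlim_integrand X Y) 0 1
      = RInt (fun t => Htilde_integrand (1 + q) X Y t - Hlim_integrand X Y t) 0 1.
    by symmetry; apply: (RInt_minus (V := R_CompleteNormedModule)).
  apply: Rle_trans (abs_RInt_le_const _ 0 1 ((8 + 2 / a) * (1 + q)) _ _ _) _.
  - lra.
  - exact: (ex_RInt_minus (V := R_NormedModule)).
  - move=> t Ht; apply: Htilde_integrand_near; lra.
  - lra.
Qed.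

Theorem lemma3p10 (q : nat -> R) :
  (forall n, -1 < q n) ->
  is_lim_seq q (-1) ->
  forall a b : R, 0 < a -> a <= b ->
  forall eps : R, 0 < eps ->
  exists N : nat, forall n : nat, (N <= n)%nat ->
    forall X Y : R, a <= X <= b -> a <= Y <= b ->
      Rabs (Htilde (q n) X Y - Hlim X Y) < eps.
Proof.
  move=> Hq /is_lim_seq_spec Hlim a b Ha _ eps Heps.
  have H2a : 0 < 2 / a by apply: Rdiv_lt_0_compat; lra.
  have HK : 0 < 8 + 2 / a by lra.
  set d := Rmin (1/2) (eps / (8 + 2 / a)).
  have Hd : 0 < d by apply: Rmin_glb_lt; [lra | apply: Rdiv_lt_0_compat].
  have [N HN] := Hlim (mkposreal d Hd).
  exists N => n Hn X Y [HX _] [HY _].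
  have /Rabs_def2 /= Hqn := HN n Hn.
  have Hd1 : d <= 1/2 := Rmin_l _ _.
  have Hd2 : d <= eps / (8 + 2 / a) := Rmin_r _ _.
  have Hclose : (8 + 2 / a) * (1 + q n) < eps.
    rewrite [X in _ < X](_ : eps = (8 + 2 / a) * (eps / (8 + 2 / a))); last by field; lra.
    apply: Rmult_lt_compat_l => //; lra.
  apply: Rle_lt_trans Hclose; apply: Htilde_near_Hlim; have := Hq n; lra.
Qed.
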